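(* Let $G=(V,E)$ be a forest and let $x\in\mathrm{SOL}(G)$. Then there exists a maximal independent set $S$ of $G$ with $S\subseteq\sigma(x)$.
   Context: A forest is a finite simple graph without cycles. With $A$ the adjacency matrix of $G$, $I$ the identity and $\mathbf{e}$ the all-ones vector, $\mathrm{SOL}(G)$ is the set of $x$ with $x\geq 0$, $(A+I)x\geq\mathbf{e}$ and $x^\top((A+I)x-\mathbf{e})=0$. $\sigma(x):=\{i\in V\mid x_i>0\}$. *)

From HB Require Import structures.
From mathcomp Require Import all_boot all_order all_algebra.
From mathcomp Require Import reals.
Set Implicit Arguments. Unset Strict Implicit. Unset Printing Implicit Defensive.
Import Order.TTheory GRing.Theory Num.Theory.
Local Open Scope ring_scope.

Definition simple_graph (V : finType) (e : rel V) : Prop :=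
  irreflexive e /\ symmetric e.

Definition forest (V : finType) (e : rel V) : Prop :=
  simple_graph e /\
  forall c : seq V, uniq c -> (3 <= size c)%N -> ~~ cycle e c.

(* ((A + I) x)_i where A is the adjacency matrix of the graph. *)
Definition AIx (R : numDomainType) (V : finType) (e : rel V) (x : V -> R) (i : V) : R :=
  \sum_(j : V) ((if e i j then 1 else 0) + (if i == j then 1 else 0)) * x j.

Definition SOL (R : numDomainType) (V : finType) (e : rel V) (x : V -> R) : Prop :=
  (forall i, 0 <= x i) /\
  (forall i, 1 <= AIx e x i) /\
  \sum_(i : V) x i * (AIx e x i - 1) = 0.

Definition support_of (R : numDomainType) (V : finType) (x : V -> R) : {set V} :=
  [set i | 0 < x i].

Definition independent (V : finType) (e : rel V) (S : {set V}) : Prop :=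
  forall u v, u \in S -> v \in S -> ~~ e u v.

Definition maximal_independent (V : finType) (e : rel V) (S : {set V}) : Prop :=
  independent e S /\
  forall T : {set V}, independent e T -> S \subset T -> T = S.

From HB Require Import structures.
From mathcomp Require Import all_boot all_order all_algebra.
From mathcomp Require Import reals.
From mathcomp Require Import zify lra.
Set Implicit Arguments. Unset Strict Implicit. Unset Printing Implicit Defensive.
Import Order.TTheory GRing.Theory Num.Theory.

(* For W a set of vertices let w_W(i) be the x-weight of the closed neighbourhood
   of i inside W; x in SOL(G) means w_V >= 1 everywhere, with equality on the
   support of x.  Take a leaf z of the forest induced on W.  If z has a neighbour p
   with x_p > 0 then x_p + x_z >= w_W(z) >= 1 >= w_W(p), so every other neighbour of
   p has weight 0; otherwise x_z >= 1.  Either way some q in the support can be put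
   in S so that deleting N[q] from W leaves the weights of the remaining vertices
   unchanged, and we recurse.  The set obtained is independent, lies in the support
   and dominates every vertex, hence is maximal independent. *)

Section ForestLeaf.
Variables (V : finType) (e : rel V).
Hypotheses (e_irr : irreflexive e) (e_sym : symmetric e).
Hypothesis e_acyclic : forall c : seq V, uniq c -> (3 <= size c)%N -> ~~ cycle e c.

Lemma maximal_path (W : {set V}) z s :
  z \in W -> all (mem W) s -> uniq (z :: s) -> path e z s ->
  exists z' s', [/\ z' \in W, uniq (z' :: s'), path e z' s' &
                    {in W, forall y, e z' y -> y \in z' :: s'}].
Proof.
have [n] : exists n, (#|W| - size s < n)%N by exists (#|W| - size s).+1.
elim: n z s => [|n IH] z s lt_n zW sW us ps; first by rewrite ltn0 in lt_n.
have [y /andP[/andP[yW ezy] y_new]|z_max] :=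
  pickP [pred y | (y \in W) && e z y && (y \notin z :: s)]; last first.
  exists z, s; split=> // y yW ezy.
  by move: (z_max y); rewrite /= yW ezy /= => /negbFE.
have size_le : ((size s).+2 <= #|W|)%N.
  rewrite cardE; apply: (@uniq_leq_size _ (y :: z :: s)); first by rewrite cons_uniq y_new.
  by move=> t; rewrite mem_enum !inE => /orP[/eqP->|/orP[/eqP->|/(allP sW)]].
apply: (IH y (z :: s)) => //=; first lia.
- by rewrite zW.
- by rewrite y_new.
- by rewrite e_sym ezy.
Qed.

Lemma path_chord_cycle z s y :
  uniq (z :: s) -> path e z s -> y \in s -> (0 < index y s)%N -> ~~ e z y.
Proof.
move=> us ps ys iy; apply/negP => ezy.
have lt_ys : (index y s < size s)%N by rewrite index_mem.
have y_last : last z (take (index y s).+1 s) = y.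
  by rewrite (take_nth z lt_ys) last_rcons nth_index.
pose c := z :: take (index y s).+1 s.
have /negP[] : ~~ cycle e c.
  apply: e_acyclic; last by rewrite /= size_takel //; lia.
  case/andP: us => zs us; rewrite /= take_uniq // andbT.
  by apply: contra zs => /mem_take.
by rewrite /c /= rcons_path y_last e_sym ezy andbT take_path.
Qed.

Lemma forest_leaf (W : {set V}) w : w \in W ->
  exists2 z, z \in W & {in W &, forall y1 y2, e z y1 -> e z y2 -> y1 = y2}.
Proof.
move=> wW; have [z [s [zW us ps z_max]]] := @maximal_path W w [::] wW isT isT isT.
exists z => // y1 y2 y1W y2W ezy1 ezy2.
have in_s y : y \in W -> e z y -> y \in s.
  move=> yW ezy; move: (z_max y yW ezy); rewrite inE => /orP[/eqP eq_yz|//].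
  by rewrite eq_yz e_irr in ezy.
have s1 := in_s y1 y1W ezy1; have s2 := in_s y2 y2W ezy2.
have [i1|/(path_chord_cycle us ps s1)] := posnP (index y1 s); last by rewrite ezy1.
have [i2|/(path_chord_cycle us ps s2)] := posnP (index y2 s); last by rewrite ezy2.
by rewrite -(nth_index z s1) -(nth_index z s2) i1 i2.
Qed.

End ForestLeaf.

Definition closed_nbhd (V : finType) (e : rel V) (i : V) : {set V} :=
  [set j | e i j || (i == j)].

Lemma closed_nbhd_refl (V : finType) (e : rel V) i : i \in closed_nbhd e i.
Proof. by rewrite inE eqxx orbT. Qed.

Lemma closed_nbhdC (V : finType) (e : rel V) i j : symmetric e ->
  (j \in closed_nbhd e i) = (i \in closed_nbhd e j).
Proof. by move=> e_sym; rewrite !inE e_sym eq_sym. Qed.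

Lemma dominating_independent_maximal (V : finType) (e : rel V) (S : {set V}) :
  independent e S -> (forall v, exists2 s, s \in S & s \in closed_nbhd e v) ->
  maximal_independent e S.
Proof.
move=> S_ind S_dom; split=> // T T_ind ST; apply/eqP; rewrite eqEsubset ST andbT.
apply/subsetP => t tT; have [s sS] := S_dom t; rewrite inE => /orP[ets|/eqP-> //].
by move: (T_ind t s tT (subsetP ST s sS)); rewrite ets.
Qed.

Local Open Scope ring_scope.

Section NeighbourhoodWeight.
Variables (R : realDomainType) (V : finType) (e : rel V) (x : V -> R).
Hypothesis x_ge0 : forall i, 0 <= x i.

Definition nbhd_weight (W : {set V}) (i : V) : R := \sum_(j in W :&: closed_nbhd e i) x j.

Lemma sum_subset_le (A B : {set V}) :
  A \subset B -> \sum_(j in A) x j <= \sum_(j in B) x j.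
Proof.
move=> AB; rewrite [leRHS](big_setID A) (setIidPr AB) lerDl.
by apply: sumr_ge0 => j _.
Qed.

Lemma sum_set2 a b : a != b -> \sum_(j in [set a; b]) x j = x a + x b.
Proof. by move=> ab; rewrite big_setU1 ?big_set1 // inE. Qed.

Lemma sum_set3 a b c : a != b -> a != c -> b != c ->
  \sum_(j in [set a; b; c]) x j = x a + x b + x c.
Proof.
move=> ab ac bc; rewrite setUC big_setU1 ?sum_set2 /= 1?addrC //.
by rewrite !inE negb_or !(eq_sym c) ac bc.
Qed.

Hypotheses (e_irr : irreflexive e) (e_sym : symmetric e).
Hypothesis e_acyclic : forall c : seq V, uniq c -> (3 <= size c)%N -> ~~ cycle e c.

(* Deleting N[q] from W changes no remaining weight: a neighbour of q that is
   adjacent to a vertex outside N[q] carries no weight. *)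
Definition pivot (W : {set V}) (q : V) : Prop :=
  [/\ q \in W, 0 < x q &
      {in W, forall j, e q j -> 0 < x j -> {in W, forall k, e j k -> k \in closed_nbhd e q}}].

Lemma exists_pivot (W : {set V}) w : w \in W ->
  {in W, forall i, 1 <= nbhd_weight W i} ->
  {in W, forall i, 0 < x i -> nbhd_weight W i <= 1} ->
  exists q, pivot W q.
Proof.
move=> wW W_ge1 W_le1.
have [z zW z_leaf] := forest_leaf e_irr e_sym e_acyclic wW.
have [p /andP[pW ezp]|z_isolated] := pickP [pred p | (p \in W) && e z p]; last first.
  have : nbhd_weight W z <= \sum_(j in [set z]) x j.
    apply: sum_subset_le; apply/subsetP => j; rewrite !inE => /andP[jW /orP[ezj|/eqP->]] //.
    by move: (z_isolated j); rewrite /= jW ezj.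
  rewrite big_set1 => z_le; exists z; split=> // [|j jW ezj].
    by move: (W_ge1 z zW) z_le; lra.
  by move: (z_isolated j); rewrite /= jW ezj.
have zp : z != p by apply: contraTneq ezp => <-; rewrite e_irr.
have z_le : nbhd_weight W z <= x z + x p.
  rewrite -sum_set2 //; apply: sum_subset_le; apply/subsetP => j.
  rewrite !inE => /andP[jW /orP[ezj|/eqP<-]]; last by rewrite eqxx.
  by rewrite (z_leaf j p jW pW ezj ezp) eqxx orbT.
have [xp0|xp_gt0] := eqVneq (x p) 0.
  exists z; split=> // [|j jW ezj]; first by move: (W_ge1 z zW) z_le; rewrite xp0; lra.
  by rewrite (z_leaf j p jW pW ezj ezp) xp0 ltxx.
have {}xp_gt0 : 0 < x p by rewrite lt_def xp_gt0 x_ge0.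
exists p; split=> // j jW epj xj_gt0 k kW ejk.
have [eq_zj|jz] := eqVneq z j.
  by rewrite -eq_zj in ejk; rewrite (z_leaf k p kW pW ejk ezp) closed_nbhd_refl.
have jp : j != p by apply: contraTneq epj => ->; rewrite e_irr.
have : x p + x z + x j <= nbhd_weight W p.
  rewrite -sum_set3 ?(eq_sym p) //; apply: sum_subset_le; apply/subsetP => i.
  rewrite !inE => /orP[/orP[]|]/eqP->.
  - by rewrite pW eqxx orbT.
  - by rewrite zW e_sym ezp.
  - by rewrite jW epj.
by move: (W_le1 p pW xp_gt0) (W_ge1 z zW) z_le; lra.
Qed.

Lemma nbhd_weight_delete_pivot (W : {set V}) q : pivot W q ->
  {in W :\: closed_nbhd e q, forall i,
    nbhd_weight (W :\: closed_nbhd e q) i = nbhd_weight W i}.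
Proof.
case=> qW _ q_pivot i; rewrite inE => /andP[i_far iW].
have vanish : \sum_(j in W :&: closed_nbhd e i :&: closed_nbhd e q) x j = 0.
  apply: big1 => j; rewrite !inE => /andP[/andP[jW /orP[eij|/eqP eq_ij]] qj]; last first.
    by rewrite eq_ij inE qj in i_far.
  case/orP: qj => [eqj|/eqP eq_qj]; last first.
    by rewrite -eq_qj in eij; rewrite inE e_sym eij in i_far.
  apply/eqP; rewrite eq_le x_ge0 andbT leNgt; apply/negP => xj_gt0.
  by move/negP: i_far; apply; apply: (q_pivot j jW eqj xj_gt0 i iW); rewrite e_sym.
by rewrite /nbhd_weight [RHS](big_setID (closed_nbhd e q)) vanish /= add0r setIDAC.
Qed.

Lemma tight_weights_dominating_independent (W : {set V}) :
  {in W, forall i, 1 <= nbhd_weight W i} ->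
  {in W, forall i, 0 < x i -> nbhd_weight W i <= 1} ->
  exists S : {set V}, [/\ S \subset W, S \subset support_of x, independent e S &
    {in W, forall v, exists2 s, s \in S & s \in closed_nbhd e v}].
Proof.
have [n] : exists n, (#|W| < n)%N by exists #|W|.+1.
elim: n W => [|n IH] W lt_n W_ge1 W_le1; first by rewrite ltn0 in lt_n.
have [->|[w wW]] := set_0Vmem W.
  by exists set0; split; rewrite ?sub0set // => u; rewrite inE.
have [q q_pivot] := exists_pivot wW W_ge1 W_le1; case: (q_pivot) => qW xq_gt0 _.
set W' := W :\: closed_nbhd e q.
have W'W : W' \subset W by apply: subsetDl.
have lt_W' : (#|W'| < n)%N.
  suff : (#|W'| < #|W|)%N by lia.
  by apply: proper_card; apply/properP; split=> //; exists q; rewrite // inE closed_nbhd_refl.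
have W'_weight := nbhd_weight_delete_pivot q_pivot.
have [S' [S'W' S'x S'_ind S'_dom]] : exists S' : {set V}, [/\ S' \subset W',
    S' \subset support_of x, independent e S' &
    {in W', forall v, exists2 s, s \in S' & s \in closed_nbhd e v}].
  apply: IH lt_W' _ _ => i iW'; rewrite W'_weight //.
  - by apply: W_ge1; apply: (subsetP W'W).
  - by apply: W_le1; apply: (subsetP W'W).
have far_q s : s \in S' -> ~~ e q s.
  by move=> /(subsetP S'W'); rewrite !inE negb_or => /andP[/andP[]].
exists (q |: S'); split.
- by rewrite subUset sub1set qW (subset_trans S'W' W'W).
- by rewrite subUset sub1set inE xq_gt0.
- move=> u v; rewrite !inE => /orP[/eqP->|uS] /orP[/eqP->|vS].
  + by rewrite e_irr.
  + exact: far_q.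
  + by rewrite e_sym far_q.
  + exact: S'_ind.
- move=> v vW; have [vq|v_far] := boolP (v \in closed_nbhd e q).
    by exists q; rewrite ?setU11 // (closed_nbhdC _ _ e_sym).
  have [s sS vs] : exists2 s, s \in S' & s \in closed_nbhd e v.
    by apply: S'_dom; rewrite inE v_far.
  by exists s; rewrite // inE sS orbT.
Qed.

End NeighbourhoodWeight.

Lemma AIx_nbhd_weight (R : realDomainType) (V : finType) (e : rel V) (x : V -> R) i :
  irreflexive e -> AIx e x i = nbhd_weight e x setT i.
Proof.
move=> e_irr; rewrite /nbhd_weight setTI big_mkcond; apply: eq_bigr => j _.
rewrite inE; have [<-|_] := eqVneq i j; first by rewrite e_irr add0r mul1r.
by case: (e i j); rewrite ?addr0 ?mul1r ?mul0r.
Qed.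

Lemma SOL_tight (R : numDomainType) (V : finType) (e : rel V) (x : V -> R) i :
  SOL e x -> 0 < x i -> AIx e x i = 1.
Proof.
case=> x_ge0 [ge1 compl] xi_gt0.
have terms_ge0 k : predT k -> 0 <= x k * (AIx e x k - 1).
  by move=> _; rewrite mulr_ge0 // subr_ge0.
move: (psumr_eq0P terms_ge0 compl (i := i) isT) => /eqP.
by rewrite mulf_eq0 gt_eqF //= subr_eq0 => /eqP.
Qed.

Theorem lemma6 (R : realType) (V : finType) (e : rel V) (x : V -> R) :
  forest e -> SOL e x ->
  exists S : {set V}, maximal_independent e S /\ S \subset support_of x.
Proof.
move=> [[e_irr e_sym] e_acyclic] x_sol; case: (x_sol) => x_ge0 [ge1 _].
have weight_ge1 : {in setT, forall i, 1 <= nbhd_weight e x setT i}.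
  by move=> i _; rewrite -AIx_nbhd_weight.
have weight_le1 : {in setT, forall i, 0 < x i -> nbhd_weight e x setT i <= 1}.
  by move=> i _ xi_gt0; rewrite -AIx_nbhd_weight // SOL_tight.
have [S [_ S_supp S_ind S_dom]] :=
  tight_weights_dominating_independent x_ge0 e_irr e_sym e_acyclic weight_ge1 weight_le1.
exists S; split=> //.
by apply: dominating_independent_maximal => // v; apply: S_dom.
Qed.
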